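(* Let $n\ge0$ be an integer with $\chi_n>c^2$, and let $x<y$ be two roots of $\psi_n$ in $(1,\infty)$. Then $$|\psi_n'(x)|\frac{x^2-1}{y^2-1}\le|\psi_n'(y)|\le|\psi_n'(x)|\sqrt{\frac{x^2-1}{x^2-\chi_n/c^2}\cdot\frac{y^2-\chi_n/c^2}{y^2-1}}.$$
   Context: For a real number $c>0$, let $\psi_0,\psi_1,\dots$ be the prolate spheroidal wave functions of band limit $c$: the real $L^2[-1,1]$-normalized eigenfunctions of $F_c[\varphi](x)=\int_{-1}^1\varphi(t)e^{icxt}\,dt$ with eigenvalues $\lambda_n$ ordered by $|\lambda_n|\ge|\lambda_{n+1}|$, extended to entire functions by $\lambda_n\psi_n(x)=\int_{-1}^1\psi_n(t)e^{icxt}\,dt$. $\chi_0<\chi_1<\dots$ are the positive numbers such that $\psi_n$ satisfies $(1-x^2)\psi''(x)-2x\psi'(x)+(\chi_n-c^2x^2)\psi(x)=0$ for all $x$. *)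

From Stdlib Require Import Reals.
From Coquelicot Require Import Coquelicot.
Open Scope R_scope.

(* psi : R -> R is a real, L^2[-1,1]-normalized eigenfunction of
   F_c[phi](x) = \int_{-1}^1 phi(t) e^{icxt} dt with (nonzero, complex)
   eigenvalue lambda = a + i b, extended to the real line by
   lambda psi(x) = \int_{-1}^1 psi(t) e^{icxt} dt
   (written out as its real and imaginary parts). *)
Definition Fc_real_eigenfunction (c : R) (psi : R -> R) : Prop :=
  is_RInt (fun t => psi t ^ 2) (-1) 1 1 /\
  exists a b : R, (a <> 0 \/ b <> 0) /\
    forall x : R,
      is_RInt (fun t => psi t * cos (c * x * t)) (-1) 1 (a * psi x) /\
      is_RInt (fun t => psi t * sin (c * x * t)) (-1) 1 (b * psi x).

Definition prolate_ode (c chi : R) (psi : R -> R) : Prop :=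
  forall x : R,
    ex_derive psi x /\ ex_derive (Derive psi) x /\
    (1 - x ^ 2) * Derive (Derive psi) x - 2 * x * Derive psi x
      + (chi - c ^ 2 * x ^ 2) * psi x = 0.

(* psi is a prolate spheroidal wave function of band limit c with
   associated ODE eigenvalue chi (i.e. psi = +- psi_n and chi = chi_n
   for some n). *)
Definition is_pswf (c chi : R) (psi : R -> R) : Prop :=
  Fc_real_eigenfunction c psi /\ prolate_ode c chi psi.

From Stdlib Require Import Reals Lra.
From Coquelicot Require Import Coquelicot.
Open Scope R_scope.

(* Write M = (t^2 - 1) psi' and q = c^2 t^2 - chi, so that the ODE reads M' = - q psi.
   Past the turning point (q > 0 on [x, y]) the energies W = M^2 + (t^2 - 1) q psi^2 and
   H = W / ((t^2 - 1) q) satisfy W' = ((t^2 - 1) q)' psi^2 >= 0 and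
   H' = - ((t^2 - 1) q)' (psi' / q)^2 <= 0. At a root of psi, W = M^2 and
   H = (t^2 - 1) psi'^2 / q, and comparing W(x) <= W(y), H(y) <= H(x) gives the two bounds.
   Before the turning point, M psi is nondecreasing on [1, x] and vanishes at both ends, which
   forces psi'(x) = 0; a Gronwall argument then gives psi'(y) = 0, so both bounds are trivial. *)

Lemma le_of_is_derive_nonneg (f df : R -> R) (a b : R) : a <= b ->
  (forall t, a <= t <= b -> is_derive f t (df t)) ->
  (forall t, a <= t <= b -> 0 <= df t) -> f a <= f b.
Proof.
intros Hab Hd Hpos.
destruct (MVT_gen f a b df) as [z [Hz Heq]];
  rewrite ?Rmin_left, ?Rmax_right in * by lra.
- intros t Ht; apply Hd; lra.
- intros t Ht; apply continuity_pt_filterlim,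
    (ex_derive_continuous (K := R_AbsRing) (V := R_NormedModule)).
  eexists; apply Hd; lra.
- assert (0 <= df z) by (apply Hpos; lra). nra.
Qed.

Lemma ge_of_is_derive_nonpos (f df : R -> R) (a b : R) : a <= b ->
  (forall t, a <= t <= b -> is_derive f t (df t)) ->
  (forall t, a <= t <= b -> df t <= 0) -> f b <= f a.
Proof.
intros Hab Hd Hneg.
apply Ropp_le_cancel, (le_of_is_derive_nonneg (fun t => - f t) (fun t => - df t)); auto.
- intros t Ht; apply (is_derive_opp (V := R_NormedModule)), Hd, Ht.
- intros t Ht; specialize (Hneg t Ht); lra.
Qed.

Lemma gronwall_zero (f df : R -> R) (K a b : R) : a <= b ->
  (forall t, a <= t <= b -> is_derive f t (df t)) ->
  (forall t, a <= t <= b -> df t <= K * f t) ->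
  f a = 0 -> 0 <= f b -> f b = 0.
Proof.
intros Hab Hd Hle Ha Hb.
assert (Hg : f b * exp (- K * b) <= f a * exp (- K * a)).
{ apply (ge_of_is_derive_nonpos (fun t => f t * exp (- K * t))
    (fun t => (df t - K * f t) * exp (- K * t))); auto.
  - intros t Ht. specialize (Hd t Ht). auto_derive.
    + eexists; exact Hd.
    + rewrite (is_derive_unique (fun s : R => f s) t _ Hd); ring.
  - intros t Ht. specialize (Hle t Ht). pose proof (exp_pos (- K * t)). nra. }
rewrite Ha, Rmult_0_l in Hg. pose proof (exp_pos (- K * b)). nra.
Qed.

Lemma is_derive_nonpos_of_left_min (u : R -> R) (a b l : R) : a < b ->
  is_derive u b l -> (forall t, a <= t < b -> u b <= u t) -> l <= 0.
Proof.
intros Hab Hd Hmin.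
apply Rnot_lt_le; intro Hl.
apply is_derive_Reals in Hd.
destruct (Hd l Hl) as [delta Hdelta].
set (h := - Rmin delta (b - a) / 2).
assert (Hm : 0 < Rmin delta (b - a)) by (apply Rmin_pos; [apply cond_pos | lra]).
pose proof (Rmin_l delta (b - a)). pose proof (Rmin_r delta (b - a)).
assert (Hh : h < 0) by (unfold h; lra).
assert (Habs : Rabs h < delta) by (rewrite Rabs_left by lra; unfold h; lra).
specialize (Hdelta h (Rlt_not_eq _ _ Hh) Habs).
apply Rabs_def2 in Hdelta.
assert (Hq : 0 < (u (b + h) - u b) / h) by lra.
assert (u b <= u (b + h)) by (apply Hmin; unfold h; lra).
assert (u (b + h) - u b = (u (b + h) - u b) / h * h) by (field; lra).
nra.
Qed.

Lemma double_mul_le_sum_sq (a b s K : R) :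
  Rabs s <= K -> 2 * a * b * s <= K * (a ^ 2 + b ^ 2).
Proof.
intro Hs. apply Rabs_le_between in Hs.
assert (0 <= (K - s) * (a + b) ^ 2) by (apply Rmult_le_pos; [lra | apply pow2_ge_0]).
assert (0 <= (K + s) * (a - b) ^ 2) by (apply Rmult_le_pos; [lra | apply pow2_ge_0]).
nra.
Qed.

Lemma mul_sq_le_mul_sq (k x t : R) : 0 <= x <= t -> k ^ 2 * x ^ 2 <= k ^ 2 * t ^ 2.
Proof.
intros Hxt. apply Rmult_le_compat_l; [apply pow2_ge_0 | apply pow_incr; exact Hxt].
Qed.

(* [auto_derive] leaves derivatives of opaque functions as [Derive (fun x => f x) t]. *)
Ltac fold_eta_Derive :=
  repeat match goal with
  | |- context [Derive (fun x : R => ?f x) ?t] =>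
      change (Derive (fun x : R => f x) t) with (Derive f t)
  end.

Section ProlateODE.

Variables (c chi : R) (psi : R -> R).
Hypothesis Hode : prolate_ode c chi psi.

Definition flux (t : R) : R := (t ^ 2 - 1) * Derive psi t.

Definition flux_energy (t : R) : R :=
  flux t ^ 2 + (t ^ 2 - 1) * (c ^ 2 * t ^ 2 - chi) * psi t ^ 2.

Definition scaled_energy (t : R) : R :=
  flux t ^ 2 / ((t ^ 2 - 1) * (c ^ 2 * t ^ 2 - chi)) + psi t ^ 2.

Lemma ex_derive_psi (t : R) : ex_derive psi t.
Proof. now destruct (Hode t). Qed.

Lemma is_derive_flux (t : R) : is_derive flux t (- (c ^ 2 * t ^ 2 - chi) * psi t).
Proof.
destruct (Hode t) as [_ [Hd2 Heq]]. unfold flux.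
auto_derive; [easy |]. fold_eta_Derive. lra.
Qed.

Lemma Derive_flux (t : R) : Derive flux t = - (c ^ 2 * t ^ 2 - chi) * psi t.
Proof. exact (is_derive_unique _ _ _ (is_derive_flux t)). Qed.

Lemma ex_derive_flux (t : R) : ex_derive flux t.
Proof. eexists; apply is_derive_flux. Qed.

Lemma is_derive_flux_energy (t : R) :
  is_derive flux_energy t (2 * t * (2 * c ^ 2 * t ^ 2 - chi - c ^ 2) * psi t ^ 2).
Proof.
unfold flux_energy. auto_derive.
- auto using ex_derive_flux, ex_derive_psi.
- fold_eta_Derive. rewrite Derive_flux. unfold flux. ring.
Qed.

Lemma is_derive_scaled_energy (t : R) : t ^ 2 - 1 <> 0 -> c ^ 2 * t ^ 2 - chi <> 0 ->
  is_derive scaled_energy t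
    (- (2 * t * (2 * c ^ 2 * t ^ 2 - chi - c ^ 2))
       * (Derive psi t / (c ^ 2 * t ^ 2 - chi)) ^ 2).
Proof.
intros Hp Hq. unfold scaled_energy. auto_derive.
- auto using ex_derive_flux, ex_derive_psi.
- fold_eta_Derive. rewrite Derive_flux. unfold flux. field.
  split; [rewrite Rpow_mult_distr | replace (t * t + -1) with (t ^ 2 - 1) by ring]; assumption.
Qed.

Lemma energy_growth_nonneg (t : R) : 1 <= t -> chi <= c ^ 2 * t ^ 2 ->
  0 <= 2 * t * (2 * c ^ 2 * t ^ 2 - chi - c ^ 2).
Proof.
intros Ht Hturn. assert (c ^ 2 * 1 ^ 2 <= c ^ 2 * t ^ 2) by (apply mul_sq_le_mul_sq; lra).
apply Rmult_le_pos; lra.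
Qed.

Lemma flux_energy_le (x y : R) : 1 <= x <= y -> chi <= c ^ 2 * x ^ 2 ->
  flux_energy x <= flux_energy y.
Proof.
intros [Hx Hxy] Hturn.
eapply (le_of_is_derive_nonneg _ _ x y Hxy); [intros; apply is_derive_flux_energy |].
intros t Ht. assert (c ^ 2 * x ^ 2 <= c ^ 2 * t ^ 2) by (apply mul_sq_le_mul_sq; lra).
apply Rmult_le_pos; [apply energy_growth_nonneg; lra | apply pow2_ge_0].
Qed.

Lemma scaled_energy_ge (x y : R) : 1 < x <= y -> chi < c ^ 2 * x ^ 2 ->
  scaled_energy y <= scaled_energy x.
Proof.
intros [Hx Hxy] Hturn.
eapply (ge_of_is_derive_nonpos _ _ x y Hxy); intros t Ht;
  assert (c ^ 2 * x ^ 2 <= c ^ 2 * t ^ 2) by (apply mul_sq_le_mul_sq; lra).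
- apply is_derive_scaled_energy; nra.
- pose proof (energy_growth_nonneg t ltac:(lra) ltac:(lra)).
  pose proof (pow2_ge_0 (Derive psi t / (c ^ 2 * t ^ 2 - chi))). nra.
Qed.

Lemma Derive_eq0_at_root_before_turning (x : R) : 1 < x -> c ^ 2 * x ^ 2 <= chi ->
  psi x = 0 -> Derive psi x = 0.
Proof.
intros Hx Hturn Hroot.
set (u := fun t => flux t * psi t).
assert (Hu : forall t : R, is_derive u t
  ((t ^ 2 - 1) * Derive psi t ^ 2 - (c ^ 2 * t ^ 2 - chi) * psi t ^ 2)).
{ intro t. unfold u. auto_derive; [auto using ex_derive_flux, ex_derive_psi |].
  fold_eta_Derive. rewrite Derive_flux. unfold flux. ring. }
assert (Hmin : forall t, 1 <= t < x -> u x <= u t).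
{ intros t Ht. replace (u x) with (u 1) by (unfold u, flux; rewrite Hroot; ring).
  eapply (le_of_is_derive_nonneg u _ 1 t); [lra | intros; apply Hu |].
  intros s Hs. assert (c ^ 2 * s ^ 2 <= c ^ 2 * x ^ 2) by (apply mul_sq_le_mul_sq; lra).
  assert (0 <= (s ^ 2 - 1) * Derive psi s ^ 2) by (apply Rmult_le_pos; [nra | apply pow2_ge_0]).
  assert (0 <= (chi - c ^ 2 * s ^ 2) * psi s ^ 2) by (apply Rmult_le_pos; [lra | apply pow2_ge_0]).
  lra. }
pose proof (is_derive_nonpos_of_left_min u 1 x _ Hx (Hu x) Hmin) as Hle.
rewrite Hroot in Hle.
destruct (Req_dec (Derive psi x) 0) as [| Hne]; [easy |].
assert (0 < (x ^ 2 - 1) * Derive psi x ^ 2)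
  by (apply Rmult_lt_0_compat; [nra | now apply pow2_gt_0]).
nra.
Qed.

Lemma gronwall_rate_bound (s y t : R) : 1 < s -> s <= t <= y ->
  Rabs (/ (t ^ 2 - 1) - (c ^ 2 * t ^ 2 - chi))
    <= / (s ^ 2 - 1) + c ^ 2 * y ^ 2 + Rabs chi.
Proof.
intros Hs Ht.
assert (Hinv : 0 < / (t ^ 2 - 1) <= / (s ^ 2 - 1)).
{ split; [apply Rinv_0_lt_compat | apply Rinv_le_contravar]; nra. }
assert (Hct : 0 <= c ^ 2 * t ^ 2 <= c ^ 2 * y ^ 2).
{ split; [apply Rmult_le_pos; apply pow2_ge_0 | apply mul_sq_le_mul_sq; lra]. }
apply Rabs_le.
pose proof (Rle_abs chi). pose proof (Rle_abs (- chi)). rewrite Rabs_Ropp in *.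
lra.
Qed.

Lemma Derive_eq0_propagates (s y : R) : 1 < s <= y ->
  psi s = 0 -> Derive psi s = 0 -> Derive psi y = 0.
Proof.
intros Hsy Hroot Hcrit.
set (E := fun t => psi t ^ 2 + flux t ^ 2).
assert (HE : E y = 0).
{ apply (gronwall_zero E
    (fun t => 2 * psi t * flux t * (/ (t ^ 2 - 1) - (c ^ 2 * t ^ 2 - chi)))
    (/ (s ^ 2 - 1) + c ^ 2 * y ^ 2 + Rabs chi) s y); [lra | | | | ].
  - intros t Ht. unfold E. auto_derive; [auto using ex_derive_flux, ex_derive_psi |].
    fold_eta_Derive. rewrite Derive_flux. unfold flux. field. nra.
  - intros t Ht. apply double_mul_le_sum_sq, (gronwall_rate_bound s y t); lra.
  - unfold E, flux. rewrite Hroot, Hcrit. ring.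
  - unfold E. pose proof (pow2_ge_0 (psi y)). pose proof (pow2_ge_0 (flux y)). lra. }
unfold E, flux in HE.
destruct (Req_dec (Derive psi y) 0) as [| Hne]; [easy |].
assert (0 < ((y ^ 2 - 1) * Derive psi y) ^ 2).
{ apply pow2_gt_0, Rmult_integral_contrapositive_currified; [nra | exact Hne]. }
pose proof (pow2_ge_0 (psi y)). lra.
Qed.

Lemma flux_energy_at_root (t : R) : psi t = 0 -> flux_energy t = flux t ^ 2.
Proof. intro Hroot. unfold flux_energy. rewrite Hroot. ring. Qed.

Lemma scaled_energy_at_root (t : R) :
  psi t = 0 -> t ^ 2 - 1 <> 0 -> c ^ 2 * t ^ 2 - chi <> 0 ->
  scaled_energy t = (t ^ 2 - 1) * Derive psi t ^ 2 / (c ^ 2 * t ^ 2 - chi).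
Proof.
intros Hroot Hp Hq. unfold scaled_energy, flux. rewrite Hroot. field.
rewrite Rpow_mult_distr. split; assumption.
Qed.

Lemma Derive_root_lower_bound (x y : R) : 1 < x <= y -> chi <= c ^ 2 * x ^ 2 ->
  psi x = 0 -> psi y = 0 ->
  Rabs (Derive psi x) * ((x ^ 2 - 1) / (y ^ 2 - 1)) <= Rabs (Derive psi y).
Proof.
intros Hxy Hturn Hx0 Hy0.
assert (Hpx : 0 < x ^ 2 - 1) by nra. assert (Hpy : 0 < y ^ 2 - 1) by nra.
pose proof (flux_energy_le x y ltac:(lra) Hturn) as Hle.
rewrite !flux_energy_at_root, <- !Rsqr_pow2 in Hle by assumption.
apply Rsqr_le_abs_0 in Hle. unfold flux in Hle.
rewrite !Rabs_mult, (Rabs_right (x ^ 2 - 1)), (Rabs_right (y ^ 2 - 1)) in Hle by lra.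
replace (Rabs (Derive psi x) * ((x ^ 2 - 1) / (y ^ 2 - 1)))
  with ((x ^ 2 - 1) * Rabs (Derive psi x) * / (y ^ 2 - 1)) by (field; lra).
replace (Rabs (Derive psi y)) with ((y ^ 2 - 1) * Rabs (Derive psi y) * / (y ^ 2 - 1))
  by (field; lra).
apply Rmult_le_compat_r; [left; apply Rinv_0_lt_compat |]; lra.
Qed.

Lemma Derive_root_upper_bound (x y : R) : 0 < c -> 1 < x <= y -> chi < c ^ 2 * x ^ 2 ->
  psi x = 0 -> psi y = 0 ->
  Rabs (Derive psi y) <=
    Rabs (Derive psi x) *
      sqrt ((x ^ 2 - 1) / (x ^ 2 - chi / c ^ 2) * ((y ^ 2 - chi / c ^ 2) / (y ^ 2 - 1))).
Proof.
intros Hc Hxy Hturn Hx0 Hy0.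
assert (Hpx : 0 < x ^ 2 - 1) by nra. assert (Hpy : 0 < y ^ 2 - 1) by nra.
assert (Hqy : 0 < c ^ 2 * y ^ 2 - chi).
{ assert (c ^ 2 * x ^ 2 <= c ^ 2 * y ^ 2) by (apply mul_sq_le_mul_sq; lra). lra. }
pose proof (scaled_energy_ge x y Hxy Hturn) as Hge.
rewrite !scaled_energy_at_root in Hge by lra.
rewrite <- (sqrt_pow2 (Rabs (Derive psi y))), <- (sqrt_pow2 (Rabs (Derive psi x))),
  <- sqrt_mult_alt, !pow2_abs by (apply Rabs_pos || apply pow2_ge_0).
apply sqrt_le_1_alt.
replace ((x ^ 2 - 1) / (x ^ 2 - chi / c ^ 2) * ((y ^ 2 - chi / c ^ 2) / (y ^ 2 - 1)))
  with ((x ^ 2 - 1) / (c ^ 2 * x ^ 2 - chi) * ((c ^ 2 * y ^ 2 - chi) / (y ^ 2 - 1))).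
2: { field. rewrite Rpow_mult_distr. repeat split; nra. }
apply Rle_trans with ((y ^ 2 - 1) * Derive psi y ^ 2 / (c ^ 2 * y ^ 2 - chi)
  * ((c ^ 2 * y ^ 2 - chi) / (y ^ 2 - 1))); [right; field; lra |].
replace (Derive psi x ^ 2 * _) with ((x ^ 2 - 1) * Derive psi x ^ 2 / (c ^ 2 * x ^ 2 - chi)
  * ((c ^ 2 * y ^ 2 - chi) / (y ^ 2 - 1))) by (field; lra).
apply Rmult_le_compat_r; [apply Rlt_le, Rdiv_lt_0_compat |]; lra.
Qed.

End ProlateODE.

Theorem theorem35 (c chi : R) (psi : R -> R) (x y : R) :
  0 < c ->
  is_pswf c chi psi ->
  chi > c ^ 2 ->
  1 < x -> x < y ->
  psi x = 0 -> psi y = 0 ->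
  Rabs (Derive psi x) * ((x ^ 2 - 1) / (y ^ 2 - 1)) <= Rabs (Derive psi y) /\
  Rabs (Derive psi y) <=
    Rabs (Derive psi x) *
      sqrt ((x ^ 2 - 1) / (x ^ 2 - chi / c ^ 2) *
            ((y ^ 2 - chi / c ^ 2) / (y ^ 2 - 1))).
Proof.
intros Hc [_ Hode] _ Hx Hxy Hx0 Hy0.
destruct (Rle_lt_dec (c ^ 2 * x ^ 2) chi) as [Hturn | Hturn].
- pose proof (Derive_eq0_at_root_before_turning _ _ _ Hode x Hx Hturn Hx0) as Hdx.
  pose proof (Derive_eq0_propagates _ _ _ Hode x y ltac:(lra) Hx0 Hdx) as Hdy.
  rewrite Hdx, Hdy, Rabs_R0. lra.
- split.
  + apply (Derive_root_lower_bound c chi); auto; lra.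
  + apply (Derive_root_upper_bound c chi); auto; lra.
Qed.
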